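(* Let $N\ge1$, $\mathsf{C}(x)=\tfrac12\log(1+x)$, and for non-negative SNRs $\mathbf{S}=(\mathsf{SNR}_{s,r},\mathsf{SNR}_{s,1},\dots,\mathsf{SNR}_{s,N},\mathsf{SNR}_{r,1},\dots,\mathsf{SNR}_{r,N})$ define $$h_j(\mathbf{S})=\mathsf{SNR}_{s,j}+\frac{\mathsf{SNR}_{r,j}\,\mathsf{SNR}_{s,r}}{\mathsf{SNR}_{s,j}+\mathsf{SNR}_{r,j}+\mathsf{SNR}_{s,r}+1},\qquad \widetilde R_{QF}(\mathbf{S})=\min_{1\le j\le N}\mathsf{C}(h_j(\mathbf{S})).$$ If $\mathsf{SNR}_{s,1},\dots,\mathsf{SNR}_{s,N}\ge0$ are held fixed, then $\widetilde R_{QF}$ is quasi-concave as a function of the remaining SNRs $(\mathsf{SNR}_{s,r},\mathsf{SNR}_{r,1},\dots,\mathsf{SNR}_{r,N})\in[0,\infty)^{N+1}$.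
   Context: $\widetilde R_{QF}$ is a quantize-forward achievable rate (Gaussian inputs, optimized quantization noise) for a real AWGN multicast relay channel with source $s$, relay $r$, destinations $1,\dots,N$ and link SNRs $\mathsf{SNR}_{u,v}\ge0$. A function $F$ on a convex set is quasi-concave if $F(\lambda x_1+(1-\lambda)x_2)\ge\min(F(x_1),F(x_2))$ for all $x_1,x_2$ and $\lambda\in[0,1]$. *)

From mathcomp Require Import all_boot all_order all_algebra.
From mathcomp Require Import all_classical all_reals all_analysis.
Set Implicit Arguments. Unset Strict Implicit. Unset Printing Implicit Defensive.
Import Order.TTheory GRing.Theory Num.Theory.
Local Open Scope ring_scope.

Definition Cap {R : realType} (x : R) : R := ln (1 + x) / 2.

Definition hQF {R : realType} (N : nat) (snr_sr : R) (snr_s snr_r : 'I_N -> R)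
  (j : 'I_N) : R :=
  snr_s j + snr_r j * snr_sr / (snr_s j + snr_r j + snr_sr + 1).

(* \tilde R_QF(S) = min_{1<=j<=N} C(h_j(S)); N >= 1 so the min is over a
   nonempty index set; the initial value of the fold is one of the terms. *)
Definition RQF {R : realType} (N : nat) (hN : (0 < N)%N) (snr_sr : R)
  (snr_s snr_r : 'I_N -> R) : R :=
  \big[Num.min/ Cap (hQF snr_sr snr_s snr_r (Ordinal hN))]_(j < N)
     Cap (hQF snr_sr snr_s snr_r j).

(* Each h_j is SNR_{s,j} plus f_c(SNR_{r,j}, SNR_{s,r}) with
   f_c(r, a) = r a / (r + a + c) and c = SNR_{s,j} + 1 > 0.  A point lies in the
   superlevel set {f_c >= k} exactly when r, a >= k and (r - k)(a - k) >= k^2 + k c,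
   i.e. when the shifted point lies above a hyperbola branch, which is a convex
   region; hence every h_j is quasi-concave.  C is increasing and a minimum of
   quasi-concave functions is quasi-concave. *)
From mathcomp Require Import all_boot all_order all_algebra.
From mathcomp Require Import all_classical all_reals all_analysis.
From mathcomp Require Import ring lra.
Import Order.TTheory GRing.Theory Num.Theory.
Local Open Scope ring_scope.

Section QuasiConcavity.
Variable R : realFieldType.

Lemma hyperbola_superlevel_convex (K u1 v1 u2 v2 l : R) :
  0 <= K -> 0 <= u1 -> 0 <= v1 -> 0 <= u2 -> 0 <= v2 -> 0 <= l <= 1 ->
  K <= u1 * v1 -> K <= u2 * v2 ->
  K <= (l * u1 + (1 - l) * u2) * (l * v1 + (1 - l) * v2).
Proof.
move=> K0 u10 v10 u20 v20 /andP[l0 l1] K1 K2.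
set w := u1 * v2 + u2 * v1.
have w0 : 0 <= w by rewrite /w; nra.
(* AM-GM: w^2 >= 4 u1 v1 u2 v2 >= 4 K^2 *)
have w2K : 2 * K <= w.
  have KK : K * K <= (u1 * v1) * (u2 * v2) by rewrite ler_pM.
  have : 4 * (K * K) <= w * w.
    have : 0 <= (u1 * v2 - u2 * v1) ^+ 2 by exact: sqr_ge0.
    rewrite /w; nra.
  nra.
have -> : (l * u1 + (1 - l) * u2) * (l * v1 + (1 - l) * v2) =
    l * l * (u1 * v1) + (1 - l) * (1 - l) * (u2 * v2) + l * (1 - l) * w.
  by rewrite /w; ring.
have : l * l * K <= l * l * (u1 * v1) by rewrite ler_wpM2l ?mulr_ge0.
have : (1 - l) * (1 - l) * K <= (1 - l) * (1 - l) * (u2 * v2).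
  by rewrite ler_wpM2l // mulr_ge0 ?subr_ge0.
have : l * (1 - l) * (2 * K) <= l * (1 - l) * w.
  by rewrite ler_wpM2l // mulr_ge0 ?subr_ge0.
nra.
Qed.

Lemma ratio_superlevel_shift {c k r a : R} :
  0 < c -> 0 <= k -> 0 <= r -> 0 <= a -> k * (r + a + c) <= r * a ->
  [/\ k <= r, k <= a & k * k + k * c <= (r - k) * (a - k)].
Proof.
move=> c0 k0 r0 a0 kra.
have kr : k <= r.
  rewrite leNgt; apply/negP => rk.
  have : 0 < k * c by rewrite mulr_gt0 //; lra.
  nra.
have ka : k <= a.
  rewrite leNgt; apply/negP => ak.
  have : 0 < k * c by rewrite mulr_gt0 //; lra.
  nra.
by split => //; nra.
Qed.

Lemma ratio_superlevel_convex (c k r1 a1 r2 a2 l : R) :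
  0 < c -> 0 <= k -> 0 <= r1 -> 0 <= a1 -> 0 <= r2 -> 0 <= a2 -> 0 <= l <= 1 ->
  k * (r1 + a1 + c) <= r1 * a1 -> k * (r2 + a2 + c) <= r2 * a2 ->
  k * ((l * r1 + (1 - l) * r2) + (l * a1 + (1 - l) * a2) + c)
    <= (l * r1 + (1 - l) * r2) * (l * a1 + (1 - l) * a2).
Proof.
move=> c0 k0 r10 a10 r20 a20 l01 k1 k2.
have [kr1 ka1 K1] := ratio_superlevel_shift c0 k0 r10 a10 k1.
have [kr2 ka2 K2] := ratio_superlevel_shift c0 k0 r20 a20 k2.
have := @hyperbola_superlevel_convex (k * k + k * c) (r1 - k) (a1 - k)
  (r2 - k) (a2 - k) l ltac:(nra) ltac:(lra) ltac:(lra) ltac:(lra) ltac:(lra)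
  l01 K1 K2.
case/andP: l01 => l0 l1; nra.
Qed.

Lemma ratio_quasi_concave (c r1 a1 r2 a2 l : R) :
  0 < c -> 0 <= r1 -> 0 <= a1 -> 0 <= r2 -> 0 <= a2 -> 0 <= l <= 1 ->
  Num.min (r1 * a1 / (r1 + a1 + c)) (r2 * a2 / (r2 + a2 + c)) <=
  (l * r1 + (1 - l) * r2) * (l * a1 + (1 - l) * a2) /
    ((l * r1 + (1 - l) * r2) + (l * a1 + (1 - l) * a2) + c).
Proof.
move=> c0 r10 a10 r20 a20 l01; case/andP: (l01) => l0 l1.
set k := Num.min _ _.
have k0 : 0 <= k by rewrite le_min !divr_ge0 ?mulr_ge0 //; lra.
have d1 : 0 < r1 + a1 + c by lra.
have d2 : 0 < r2 + a2 + c by lra.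
have d : 0 < (l * r1 + (1 - l) * r2) + (l * a1 + (1 - l) * a2) + c.
  by have := mulr_ge0 l0 r10; have := mulr_ge0 l0 a10; nra.
have k1 : k * (r1 + a1 + c) <= r1 * a1.
  by rewrite -ler_pdivlMr // ge_min lexx.
have k2 : k * (r2 + a2 + c) <= r2 * a2.
  by rewrite -ler_pdivlMr // ge_min lexx orbT.
by rewrite ler_pdivlMr //; exact: ratio_superlevel_convex k1 k2.
Qed.

End QuasiConcavity.

Lemma hQF_ge0 {R : realType} {N : nat} {a : R} (s r : 'I_N -> R) j :
  0 <= a -> 0 <= s j -> 0 <= r j -> 0 <= hQF a s r j.
Proof.
move=> a0 s0 r0; rewrite /hQF addr_ge0 // divr_ge0 ?mulr_ge0 //; lra.
Qed.

Lemma hQF_quasi_concave (R : realType) (N : nat) (s : 'I_N -> R) (a1 a2 : R)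
    (r1 r2 : 'I_N -> R) (l : R) j :
  0 <= s j -> 0 <= a1 -> 0 <= r1 j -> 0 <= a2 -> 0 <= r2 j -> 0 <= l <= 1 ->
  Num.min (hQF a1 s r1 j) (hQF a2 s r2 j) <=
  hQF (l * a1 + (1 - l) * a2) s (fun j => l * r1 j + (1 - l) * r2 j) j.
Proof.
move=> s0 a10 r10 a20 r20 l01.
have denomE x y : s j + x + y + 1 = x + y + (s j + 1) by ring.
rewrite /hQF !denomE -addr_minr lerD2l.
by apply: ratio_quasi_concave => //; lra.
Qed.

Lemma Cap_le {R : realType} {x y : R} : 0 <= x -> x <= y -> Cap x <= Cap y.
Proof.
move=> x0 xy; rewrite /Cap ler_wpM2r ?invr_ge0 //.
by rewrite ler_ln ?lerD2l // posrE; lra.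
Qed.

Lemma Cap_min (R : realType) (x y : R) :
  0 <= x -> 0 <= y -> Cap (Num.min x y) = Num.min (Cap x) (Cap y).
Proof.
move=> x0 y0; case: (leP x y) => xy.
- by rewrite (min_idPl (Cap_le x0 xy)).
- by rewrite (min_idPr (Cap_le y0 (ltW xy))).
Qed.

Theorem theorem3 (R : realType) (N : nat) (hN : (0 < N)%N)
  (snr_s : 'I_N -> R) (hs : forall j, 0 <= snr_s j)
  (a1 a2 : R) (r1 r2 : 'I_N -> R) (lam : R) :
  0 <= a1 -> (forall j, 0 <= r1 j) ->
  0 <= a2 -> (forall j, 0 <= r2 j) ->
  0 <= lam <= 1 ->
  Num.min (RQF hN a1 snr_s r1) (RQF hN a2 snr_s r2)
    <= RQF hN (lam * a1 + (1 - lam) * a2) snr_s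
             (fun j => lam * r1 j + (1 - lam) * r2 j).
Proof.
move=> a10 r10 a20 r20 lam01.
have min_le_mix j : Num.min (RQF hN a1 snr_s r1) (RQF hN a2 snr_s r2) <=
    Cap (hQF (lam * a1 + (1 - lam) * a2) snr_s
           (fun j => lam * r1 j + (1 - lam) * r2 j) j).
  have h1 := hQF_ge0 snr_s r1 j a10 (hs j) (r10 j).
  have h2 := hQF_ge0 snr_s r2 j a20 (hs j) (r20 j).
  apply: le_trans (_ : Cap (Num.min (hQF a1 snr_s r1 j) (hQF a2 snr_s r2 j)) <= _).
  - by rewrite Cap_min // le_min !ge_min /RQF !bigmin_le ?orbT.
  - apply: Cap_le; first by rewrite le_min h1 h2.
    exact: hQF_quasi_concave.
by rewrite {3}/RQF le_bigmin.
Qed.
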